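(* Let $x^*\in\mathcal X$. If $\hat\eta_f(x^*,\hat{\mathbb Y}_d)=0$ for some $\hat{\mathbb Y}_d=\{y_d^1,\dots,y_d^k\}\subseteq\mathbb Y_d$, then $\eta_f(x^* )=0$, i.e. $x^*$ is feasible for $\mathcal U(x^* )$. If $r_f(x^*,u^* )>0$ for some $u^*\in\mathcal U(x^* )$, then $\eta_f(x^* )>0$, i.e. $x^*$ is infeasible for $\mathcal U(x^* )$.
   Context: $\mathcal X=\{x\in\mathbb R^{n_x}_+\times\mathbb Z^{m_x}_+: Ax\ge b\}$; $\mathcal U(x)=\{u\in\mathbb R^{n_u}_+: F(x)u\le h+Gx\}$, nonempty and bounded for $x\in\mathcal X$; $\mathcal Y(x,u)=\{(y_c,y_d)\in\mathbb R^{n_y}_+\times\mathbb Y_d: B_{2,c}y_c+B_{2,d}y_d\ge d-B_1x-Eu\}$, $\mathbb Y_d\subseteq\mathbb Z^{m_y}_+$ finite; $x$ is feasible for $\mathcal U(x)$ if $\mathcal Y(x,u)\ne\emptyset$ for all $u\in\mathcal U(x)$. $\tilde{\mathcal Y}(x,u)=\{(y_c,y_d,\tilde y): B_{2,c}y_c+B_{2,d}y_d+\mathbf1\tilde y\ge d-B_1x-Eu,\ y_c\ge0,\ y_d\in\mathbb Y_d,\ \tilde y\ge0\}$ ($\tilde y$ scalar). Define $\eta_f(x)=\max_{u\in\mathcal U(x)}\min\{\tilde y:(y_c,y_d,\tilde y)\in\tilde{\mathcal Y}(x,u)\}$; $r_f(x,u)=\min\{\tilde y:(y_c,y_d,\tilde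 y)\in\tilde{\mathcal Y}(x,u)\}$; and $\hat\eta_f(x,\hat{\mathbb Y}_d)=\max\{\hat\eta_f: u\in\mathcal U(x),\ \hat\eta_f\le\min\{\tilde y^t: B_{2,c}y_c^t+\mathbf1\tilde y^t\ge d-B_1x-Eu-B_{2,d}y_d^t,\ y_c^t\ge0,\ \tilde y^t\ge0\}\ \text{for } t=1,\dots,k\}$. *)

From HB Require Import structures.
From mathcomp Require Import all_boot all_order all_algebra.
From mathcomp Require Import all_classical all_reals.
Set Implicit Arguments. Unset Strict Implicit. Unset Printing Implicit Defensive.
Import Order.TTheory GRing.Theory Num.Theory.
Local Open Scope ring_scope.
Local Open Scope classical_set_scope.

Definition lev (R : realType) n (a b : 'cV[R]_n) : Prop := forall i, a i 0 <= b i 0.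
Definition nonneg (R : realType) n (a : 'cV[R]_n) : Prop := forall i, 0 <= a i 0.
Definition is_int (R : realType) (a : R) : Prop := exists z : int, a = z%:~R.

(* Problem data.  x = (x_c, x_d) is stored as one column vector of size
   nx + mx: the first nx entries are continuous, the last mx integral.
   y_d lives in 'cV_my; Yd is the finite set of admissible y_d (a seq). *)
Record data (R : realType) (nx mx na nu p ny my q : nat) := Data {
  A : 'M[R]_(na, nx + mx); b : 'cV[R]_na;
  F : 'cV[R]_(nx + mx) -> 'M[R]_(p, nu); h : 'cV[R]_p; G : 'M[R]_(p, nx + mx);
  B1 : 'M[R]_(q, nx + mx); B2c : 'M[R]_(q, ny); B2d : 'M[R]_(q, my);
  E : 'M[R]_(q, nu); d : 'cV[R]_q;
  Yd : seq 'cV[R]_my }.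

Section Defs.
Variables (R : realType) (nx mx na nu p ny my q : nat).
Variable D : data R nx mx na nu p ny my q.

Definition inX (x : 'cV[R]_(nx + mx)) : Prop :=
  nonneg x /\ (forall i : 'I_mx, is_int (x (rshift nx i) 0)) /\
  lev (b D) (A D *m x).

Definition Uset (x : 'cV[R]_(nx + mx)) : set 'cV[R]_nu :=
  [set u | nonneg u /\ lev (F D x *m u) (h D + G D *m x)].

Definition rhs (x : 'cV[R]_(nx + mx)) (u : 'cV[R]_nu) : 'cV[R]_q :=
  d D - B1 D *m x - E D *m u.

Definition Y_nonempty x u : Prop :=
  exists (yc : 'cV[R]_ny) (yd : 'cV[R]_my),
    nonneg yc /\ yd \in Yd D /\ lev (rhs x u) (B2c D *m yc + B2d D *m yd).

Definition feasible x : Prop := forall u, Uset x u -> Y_nonempty x u.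

Definition r_f x u : R :=
  inf [set yt : R | exists (yc : 'cV[R]_ny) (yd : 'cV[R]_my),
         [/\ nonneg yc, yd \in Yd D, 0 <= yt &
             lev (rhs x u) (B2c D *m yc + B2d D *m yd + const_mx yt)]].

Definition eta_f x : R := sup [set r_f x u | u in Uset x].

Definition lp_t x u (ydt : 'cV[R]_my) : R :=
  inf [set yt : R | exists yc : 'cV[R]_ny,
         [/\ nonneg yc, 0 <= yt &
             lev (rhs x u - B2d D *m ydt) (B2c D *m yc + const_mx yt)]].

Definition eta_hat x k (yhat : 'I_k -> 'cV[R]_my) : R :=
  sup [set e : R | exists u, Uset x u /\ forall t, e <= lp_t x u (yhat t)].

End Defs.

From HB Require Import structures.
From mathcomp Require Import all_boot all_order all_algebra.
From mathcomp Require Import all_classical all_reals.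
From mathcomp Require Import lra ring.
Set Implicit Arguments. Unset Strict Implicit. Unset Printing Implicit Defensive.
Import Order.TTheory GRing.Theory Num.Theory.
Local Open Scope ring_scope.
Local Open Scope classical_set_scope.

(* For each u in U(x), hat eta_f(x, Yhat) = 0 forces one of the inner LPs
   min { ytil >= 0 : B2c yc + ytil >= d - B1 x - E u - B2d y_d^t, yc >= 0 }
   to have value 0 (otherwise the minimum over t of their positive values
   would lie below the supremum hat eta_f).  Such an LP attains the value 0
   because the finitely generated cone { B2c yc | yc >= 0 } is closed, which is
   Fourier-Motzkin elimination: a system c <= A y, y >= 0, that is solvable up
   to a slack eps * w for every eps > 0 is solvable.  The optimal yc with y_d^t
   is a point of Y(x, u), so x is feasible and every r_f(x, u) is 0.
   Conversely r_f(x, u) > 0 forbids Y(x, u) <> {}, and eta_f(x) >= r_f(x, u).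
   Boundedness of U(x) makes the suprema finite. *)

Section FourierMotzkin.
Variable R : realFieldType.

Definition nonneg_solution (I : Type) (n : nat) (a : I -> 'I_n -> R)
    (c : I -> R) (y : 'I_n -> R) : Prop :=
  (forall j, 0 <= y j) /\ forall i, c i <= \sum_j a i j * y j.

Definition approx_solvable (I : Type) (n : nat) (a : I -> 'I_n -> R)
    (c w : I -> R) : Prop :=
  forall eps, 0 < eps -> exists y, nonneg_solution a (fun i => c i - eps * w i) y.

Lemma le0_of_le_eps_mul (x w : R) :
  0 <= w -> (forall eps, 0 < eps -> x <= eps * w) -> x <= 0.
Proof.
move=> w_ge0 le_x; have [w0|w_neq0] := eqVneq w 0.
  by have := le_x 1 ltr01; rewrite w0 mulr0.
have w_gt0 : 0 < w by rewrite lt_def w_neq0 w_ge0.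
apply/ler_addgt0Pr => e e_gt0; rewrite add0r.
by have := le_x (e / w) (divr_gt0 e_gt0 w_gt0); rewrite divfK.
Qed.

Lemma approx_solvable0 (I : Type) (a : I -> 'I_0 -> R) (c w : I -> R) :
  (forall i, 0 <= w i) -> approx_solvable a c w ->
  exists y, nonneg_solution a c y.
Proof.
move=> w_ge0 approx; exists (fun _ => 0); split=> // i; rewrite big_ord0.
apply: (le0_of_le_eps_mul (w_ge0 i)) => eps eps_gt0.
have [y [_ /(_ i)]] := approx eps eps_gt0; rewrite big_ord0; lra.
Qed.

Section Elimination.
Variables (I : finType) (n : nat) (a : I -> 'I_n.+1 -> R).

Local Notation al i := (a i ord_max).
Local Notation wd := (widen_ord (leqnSn n)).

(* The pair (i, k) encodes the combination of rows i and k that cancels the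
   last variable when al i > 0 > al k; otherwise row i alone if al i <= 0,
   and the trivial row otherwise. *)
Definition elim_lam (ik : I * I) : R :=
  if al ik.1 <= 0 then 1 else if al ik.2 < 0 then - al ik.2 else 0.

Definition elim_mu (ik : I * I) : R :=
  if al ik.1 <= 0 then 0 else if al ik.2 < 0 then al ik.1 else 0.

Definition elim_comb (f : I -> R) (ik : I * I) : R :=
  elim_lam ik * f ik.1 + elim_mu ik * f ik.2.

Definition elim_mat (ik : I * I) (j : 'I_n) : R := elim_comb (a ^~ (wd j)) ik.

Lemma elim_lam_ge0 ik : 0 <= elim_lam ik.
Proof.
rewrite /elim_lam; case: (lerP (al ik.1) 0) => _; first exact: ler01.
by case: (ltrP (al ik.2) 0) => al2; lra.
Qed.

Lemma elim_mu_ge0 ik : 0 <= elim_mu ik.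
Proof.
rewrite /elim_mu; case: (lerP (al ik.1) 0) => al1 //.
by case: (ltrP (al ik.2) 0) => _; lra.
Qed.

Lemma elim_comb_ge0 f ik : (forall i, 0 <= f i) -> 0 <= elim_comb f ik.
Proof.
by move=> f_ge0; rewrite addr_ge0 // mulr_ge0 // ?elim_lam_ge0 ?elim_mu_ge0.
Qed.

Lemma elim_comb_le f g ik :
  (forall i, f i <= g i) -> elim_comb f ik <= elim_comb g ik.
Proof. by move=> le_fg; rewrite lerD // ler_wpM2l // ?elim_lam_ge0 ?elim_mu_ge0. Qed.

Lemma elim_comb_last_le0 ik : elim_comb (fun i => al i) ik <= 0.
Proof.
rewrite /elim_comb /elim_lam /elim_mu.
case: (lerP (al ik.1) 0) => [al1_le0|_]; first by rewrite mul1r mul0r addr0.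
case: (ltrP (al ik.2) 0) => _; lra.
Qed.

Lemma elim_comb_nonpos f i k : al i <= 0 -> elim_comb f (i, k) = f i.
Proof.
by move=> al_le0; rewrite /elim_comb /elim_lam /elim_mu /= al_le0 mul1r mul0r addr0.
Qed.

Lemma elim_comb_posneg f i k : 0 < al i -> al k < 0 ->
  elim_comb f (i, k) = - al k * f i + al i * f k.
Proof.
by move=> al_i al_k; rewrite /elim_comb /elim_lam /elim_mu /= leNgt al_i al_k.
Qed.

Lemma elim_combB (c w : I -> R) (eps : R) ik :
  elim_comb (fun i => c i - eps * w i) ik = elim_comb c ik - eps * elim_comb w ik.
Proof. by rewrite /elim_comb; ring. Qed.

Lemma elim_mat_sum (y : 'I_n -> R) ik :
  \sum_j elim_mat ik j * y j = elim_comb (fun i => \sum_j a i (wd j) * y j) ik.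
Proof.
rewrite /elim_comb !mulr_sumr -big_split /=.
by apply: eq_bigr => j _; rewrite /elim_mat /elim_comb mulrDl !mulrA.
Qed.

Lemma elim_nonneg_solution (c : I -> R) (y : 'I_n.+1 -> R) :
  nonneg_solution a c y ->
  nonneg_solution elim_mat (elim_comb c) (fun j => y (wd j)).
Proof.
move=> [y_ge0 le_c]; split=> [j|ik]; first exact: y_ge0.
rewrite elim_mat_sum.
have le_row i : c i <= \sum_j a i (wd j) * y (wd j) + al i * y ord_max.
  by have := le_c i; rewrite big_ord_recr.
apply: (le_trans (elim_comb_le ik le_row)).
have := elim_comb_last_le0 ik; have := y_ge0 ord_max.
rewrite /elim_comb /=; nra.
Qed.

Lemma elim_approx_solvable (c w : I -> R) :
  approx_solvable a c w -> approx_solvable elim_mat (elim_comb c) (elim_comb w).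
Proof.
move=> approx eps eps_gt0; have [y sol] := approx eps eps_gt0.
exists (fun j => y (wd j)).
have -> : (fun ik => elim_comb c ik - eps * elim_comb w ik) =
          elim_comb (fun i => c i - eps * w i).
  by apply/funext => ik; rewrite elim_combB.
exact: elim_nonneg_solution.
Qed.

Definition ext_last (y : 'I_n -> R) (z : R) (j : 'I_n.+1) : R :=
  if unlift ord_max j is Some j' then y j' else z.

Lemma ext_last_widen y z j : ext_last y z (wd j) = y j.
Proof.
have -> : wd j = lift ord_max j by apply: val_inj; rewrite [RHS]lift_max.
by rewrite /ext_last liftK.
Qed.

Lemma ext_last_max y z : ext_last y z ord_max = z.
Proof. by rewrite /ext_last unlift_none. Qed.

(* Back-substitution: the last variable is the largest lower bound it is
   subject to (and 0); the eliminated rows say exactly that this value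
   satisfies every upper bound. *)
Lemma elim_lift (c : I -> R) (y : 'I_n -> R) :
  nonneg_solution elim_mat (elim_comb c) y -> exists y', nonneg_solution a c y'.
Proof.
move=> [y_ge0 le_c].
pose s i := \sum_j a i (wd j) * y j.
have le_s ik : elim_comb c ik <= elim_comb s ik by rewrite -elim_mat_sum.
have le_nonpos i : al i <= 0 -> c i <= s i.
  by move=> al_le0; have := le_s (i, i); rewrite !elim_comb_nonpos.
have le_posneg i k : 0 < al i -> al k < 0 ->
    - al k * c i + al i * c k <= - al k * s i + al i * s k.
  by move=> al_i al_k; have := le_s (i, k); rewrite !elim_comb_posneg.
pose z := \big[Order.max/0]_(i | 0 < al i) ((c i - s i) / al i).
exists (ext_last y z); split=> [j|i].
  by rewrite /ext_last; case: unlift => [j'|]; [exact: y_ge0 | exact: bigmax_ge_id].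
rewrite big_ord_recr /= ext_last_max; under eq_bigr do rewrite ext_last_widen.
rewrite -/(s i).
have [al_gt0|al_le0] := ltrP 0 (al i).
  have le_z : (c i - s i) / al i <= z by exact: le_bigmax_cond.
  rewrite ler_pdivrMr // in le_z; lra.
have [al_lt0|al_ge0] := ltrP (al i) 0; last first.
  have -> : al i = 0 by apply/le_anti; rewrite al_le0 al_ge0.
  by rewrite mul0r addr0 le_nonpos.
suff z_le : z <= (s i - c i) / - al i.
  rewrite ler_pdivlMr ?oppr_gt0 // in z_le; lra.
apply: bigmax_le => [|k al_k].
  by rewrite divr_ge0 // ?subr_ge0 ?oppr_ge0 ?le_nonpos ?ltW.
have := le_posneg k i al_k al_lt0.
rewrite ler_pdivlMr ?oppr_gt0 // mulrAC ler_pdivrMr //; lra.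
Qed.

End Elimination.

Lemma approx_solvable_solvable n : forall (I : finType) (a : I -> 'I_n -> R)
    (c w : I -> R), (forall i, 0 <= w i) -> approx_solvable a c w ->
  exists y, nonneg_solution a c y.
Proof.
elim: n => [|n IH] I a c w w_ge0 approx; first exact: approx_solvable0 approx.
have w'_ge0 ik : 0 <= elim_comb a w ik by exact: elim_comb_ge0.
have [y /elim_lift//] := IH _ _ _ _ w'_ge0 (elim_approx_solvable approx).
Qed.

End FourierMotzkin.

Lemma inf_ge0 (R : realType) (S : set R) : (forall e, S e -> 0 <= e) -> 0 <= inf S.
Proof.
move=> S_ge0; have [S_ne0|S_empty] := pselect (S !=set0).
  exact: lb_le_inf S_ne0 S_ge0.
have -> : S = set0 by apply/seteqP; split=> e // Se; apply: S_empty; exists e.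
by rewrite inf0.
Qed.

Section InnerLP.
Variables (R : realType) (nx mx na nu p ny my q : nat).
Variable D : data R nx mx na nu p ny my q.
Implicit Types (x : 'cV[R]_(nx + mx)) (u : 'cV[R]_nu) (yd : 'cV[R]_my).

Definition lp_set x u yd : set R :=
  [set yt : R | exists yc : 'cV[R]_ny,
     [/\ nonneg yc, 0 <= yt &
         lev (rhs D x u - B2d D *m yd) (B2c D *m yc + const_mx yt)]].

Lemma lp_tE x u yd : lp_t D x u yd = inf (lp_set x u yd).
Proof. by []. Qed.

Lemma r_f_ge0 x u : 0 <= r_f D x u.
Proof. by apply: inf_ge0 => e [yc [yd []]]. Qed.

Lemma lp_set_sum_norm x u yd :
  lp_set x u yd (\sum_i `|(rhs D x u - B2d D *m yd) i 0|).
Proof.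
exists 0; split=> [i||i]; first by rewrite mxE.
  by apply: sumr_ge0 => i _.
rewrite mulmx0 add0r [X in _ <= X]mxE (bigD1 i) //=.
by rewrite (le_trans (ler_norm _)) // lerDl sumr_ge0.
Qed.

Lemma lp_t_le_sum_norm x u yd :
  lp_t D x u yd <= \sum_i `|(rhs D x u - B2d D *m yd) i 0|.
Proof.
rewrite lp_tE; apply: ge_inf; last exact: lp_set_sum_norm.
by exists 0 => e [yc []].
Qed.

Lemma r_f_le_lp_t x u yd : yd \in Yd D -> r_f D x u <= lp_t D x u yd.
Proof.
move=> yd_in; rewrite lp_tE; apply: lb_le_inf.
  by eexists; exact: lp_set_sum_norm.
move=> e [yc [yc_ge0 e_ge0 le_rhs]]; apply: ge_inf.
  by exists 0 => e' [? [? []]].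
by exists yc, yd; split=> // i; have := le_rhs i; rewrite !mxE; lra.
Qed.

Lemma r_f_eq0 x u : Y_nonempty D x u -> r_f D x u = 0.
Proof.
move=> [yc [yd [yc_ge0 [yd_in le_rhs]]]]; apply/le_anti; rewrite r_f_ge0 andbT.
apply: ge_inf; first by exists 0 => e [? [? []]].
by exists yc, yd; split=> // i; have := le_rhs i; rewrite !mxE; lra.
Qed.

Lemma feasible_eta_f_eq0 x : (exists u, Uset D x u) -> feasible D x -> eta_f D x = 0.
Proof.
move=> [u0 Uu0] feas; rewrite /eta_f (_ : [set _ | _ in _] = [set 0]) ?sup1 //.
apply/seteqP; split=> [_ [u Uu <-]|_ ->]; first by rewrite /= (r_f_eq0 (feas u Uu)).
by exists u0 => //; rewrite (r_f_eq0 (feas u0 Uu0)).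
Qed.

Lemma lp_t_le0_solvable x u yd : lp_t D x u yd <= 0 ->
  exists2 yc : 'cV[R]_ny, nonneg yc & lev (rhs D x u - B2d D *m yd) (B2c D *m yc).
Proof.
move=> lp_le0.
have approx : approx_solvable (fun i j => B2c D i j)
    (fun i => (rhs D x u - B2d D *m yd) i 0) (fun=> 1).
  move=> eps eps_gt0.
  have [e [yc [yc_ge0 _ le_rhs]] e_lt] : exists2 e, lp_set x u yd e & e < eps.
    apply: inf_lt; first by eexists; exact: lp_set_sum_norm.
    by rewrite -lp_tE (le_lt_trans lp_le0).
  exists (fun j => yc j 0); split=> // i /=; move: (le_rhs i).
  rewrite [X in _ <= X]mxE [X in _ <= X + _]mxE [X in _ <= _ + X]mxE; lra.
have [|y [y_ge0 le_y]] := approx_solvable_solvable _ approx.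
  by move=> _; exact: ler01.
exists (\col_j y j) => i; first by rewrite mxE.
rewrite [X in _ <= X]mxE; under eq_bigr do rewrite mxE; exact: le_y.
Qed.

Lemma Y_nonempty_of_lp_t_le0 x u yd :
  yd \in Yd D -> lp_t D x u yd <= 0 -> Y_nonempty D x u.
Proof.
move=> yd_in /lp_t_le0_solvable[yc yc_ge0 le_rhs].
by exists yc, yd; split=> //; split=> // i; have := le_rhs i; rewrite !mxE; lra.
Qed.

Lemma lp_t_bounded x yd (M : R) :
  exists K, forall u, (forall i, `|u i 0| <= M) -> lp_t D x u yd <= K.
Proof.
exists (\sum_i (`|(d D - B1 D *m x - B2d D *m yd) i 0| + \sum_j `|E D i j| * M)).
move=> u u_le; apply: le_trans (lp_t_le_sum_norm x u yd) _; apply: ler_sum => i _.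
have -> : (rhs D x u - B2d D *m yd) i 0 =
          (d D - B1 D *m x - B2d D *m yd) i 0 - (E D *m u) i 0.
  by rewrite /rhs !mxE; ring.
apply: le_trans (ler_normB _ _) _; rewrite lerD2l mxE.
apply: le_trans (ler_norm_sum _ _ _) _; apply: ler_sum => j _.
by rewrite normrM ler_wpM2l.
Qed.

Section BoundedU.
Variables (x : 'cV[R]_(nx + mx)) (M : R).
Hypothesis U_bounded : forall u, Uset D x u -> forall i, `|u i 0| <= M.

Lemma r_f_le_eta_f u : Yd D != [::] -> Uset D x u -> r_f D x u <= eta_f D x.
Proof.
case Yd_eq: (Yd D) => [//|yd0 s] _ Uu.
have yd0_in : yd0 \in Yd D by rewrite Yd_eq mem_head.
have [K le_K] := lp_t_bounded x yd0 M.
have ub : has_ubound [set r_f D x v | v in Uset D x].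
  exists K => _ [v Uv <-].
  exact: le_trans (r_f_le_lp_t _ _ yd0_in) (le_K v (U_bounded Uv)).
exact: ub_le_sup ub _ (ex_intro2 _ _ u Uu erefl).
Qed.

Lemma le_eta_hat k (yhat : 'I_k -> 'cV[R]_my) (t0 : 'I_k) u e :
  Uset D x u -> (forall t, e <= lp_t D x u (yhat t)) -> e <= eta_hat D x yhat.
Proof.
move=> Uu le_e; have [K le_K] := lp_t_bounded x (yhat t0) M.
have ub : has_ubound
    [set e : R | exists u, Uset D x u /\ forall t, e <= lp_t D x u (yhat t)].
  by exists K => e' [v [Uv le_e']]; exact: le_trans (le_e' t0) (le_K v (U_bounded Uv)).
exact: ub_le_sup ub e (ex_intro _ u (conj Uu le_e)).
Qed.

Lemma feasible_of_eta_hat_le0 k (yhat : 'I_k -> 'cV[R]_my) :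
  (0 < k)%N -> (forall t, yhat t \in Yd D) -> eta_hat D x yhat <= 0 ->
  feasible D x.
Proof.
move=> k_gt0 yhat_in eta_le0 u Uu.
have [[t lp_le0]|lp_gt0] := pselect (exists t, lp_t D x u (yhat t) <= 0).
  exact: Y_nonempty_of_lp_t_le0 (yhat_in t) lp_le0.
pose m := \big[Order.min/1]_t lp_t D x u (yhat t).
have m_gt0 : 0 < m.
  apply: lt_bigmin => [|t _]; first exact: ltr01.
  by rewrite ltNge; apply/negP => lp_le0; apply: lp_gt0; exists t.
have m_le : m <= eta_hat D x yhat.
  by apply: (le_eta_hat (Ordinal k_gt0) Uu) => t; exact: bigmin_le.
lra.
Qed.

End BoundedU.
End InnerLP.

Theorem corollary26 (R : realType) (nx mx na nu p ny my q : nat)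
  (D : data R nx mx na nu p ny my q)
  (* standing assumptions: Yd finite (a seq) of nonneg integer vectors, nonempty;
     U(x) nonempty and bounded for every x in X *)
  (HYd : forall yd, yd \in Yd D -> nonneg yd /\ forall i, is_int (yd i 0))
  (HYd0 : Yd D != [::])
  (HU : forall x, inX D x ->
          (exists u, Uset D x u) /\
          (exists M : R, forall u, Uset D x u -> forall i, `|u i 0| <= M))
  (xs : 'cV[R]_(nx + mx)) (Hxs : inX D xs) :
  (forall (k : nat) (yhat : 'I_k -> 'cV[R]_my),
      (0 < k)%N -> (forall t, yhat t \in Yd D) ->
      eta_hat D xs yhat = 0 -> eta_f D xs = 0 /\ feasible D xs) /\
  (forall us, Uset D xs us -> r_f D xs us > 0 ->
      eta_f D xs > 0 /\ ~ feasible D xs).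
Proof.
have [U_ne0 [M U_bounded]] := HU xs Hxs.
split=> [k yhat k_gt0 yhat_in eta0 | us Uus rf_gt0].
  have feas : feasible D xs.
    by apply: (feasible_of_eta_hat_le0 U_bounded k_gt0 yhat_in); rewrite eta0.
  by split=> //; exact: feasible_eta_f_eq0.
split; first exact: lt_le_trans rf_gt0 (r_f_le_eta_f U_bounded HYd0 Uus).
by move=> feas; move: rf_gt0; rewrite (r_f_eq0 (feas us Uus)) ltxx.
Qed.
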